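(* Let $G=(V,E,\ell,\Phi)$ be a strongly connected trackable weak model. If $(x_1,\dots,x_t)$ and $(x'_1,\dots,x'_t)$ are walks in $G$ with $x_1=x'_1$, $x_t=x'_t$ and $\ell(x_i)=\ell(x'_i)$ for all $1\le i\le t$, then $x_i=x'_i$ for all $1\le i\le t$. Equivalently, when observations start from a known node, at most one hypothesis (as a walk up to time $t$) visits a given node at a given time $t$.
   Context: A (single-colored) weak model $G=(V,E,\ell,\Phi)$ consists of a finite set of nodes $V$, directed edges $E\subseteq V\times V$, a finite color set $\Phi$ and a coloring $\ell:V\to\Phi$. A walk of length $t$ is a node sequence $(x_1,\dots,x_t)$ with $(x_i,x_{i+1})\in E$. For $Y_{[t]}\in\Phi^t$, a hypothesis is a walk $(x_1,\dots,x_t)$ with $\ell(x_i)=Y_i$ for all $i$; $\mathcal H_G(Y_{[t]})$ is the set of hypotheses and $n_G(t)=\max_{Y_{[t]}}|\mathcal H_G(Y_{[t]})|$. $G$ is trackable if $n_G(t)=O(t^k)$ for some $k\ge0$, and strongly connected if every node is reachable from every node by a directed path. *)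

(* A weak model G = (V, E, l, Phi) is given by
   V Phi : finType, E : rel V (directed edges), l : V -> Phi. *)
From mathcomp Require Import all_boot.
Set Implicit Arguments. Unset Strict Implicit. Unset Printing Implicit Defensive.

Definition is_walk (V : finType) (E : rel V) (w : seq V) : bool :=
  if w is x :: s then path E x s else true.

Definition hypotheses (V Phi : finType) (E : rel V) (l : V -> Phi)
  (t : nat) (Y : t.-tuple Phi) : {set t.-tuple V} :=
  [set w : t.-tuple V | is_walk E w && (map l w == Y)].

Definition nG (V Phi : finType) (E : rel V) (l : V -> Phi) (t : nat) : nat :=
  \max_(Y : t.-tuple Phi) #|hypotheses E l Y|.

Definition trackable (V Phi : finType) (E : rel V) (l : V -> Phi) : Prop :=
  exists (k c N : nat), forall t, N <= t -> nG E l t <= c * t ^ k.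

Definition strongly_connected (V : finType) (E : rel V) : Prop :=
  forall x y : V, connect E x y.

(* Suppose two distinct walks from x with the same colors end at the same node.
   Closing both with a common path back to x gives two distinct closed walks at x
   of the same length n with the same colors.  Concatenating j of them, in any of
   the 2^j possible orders, yields 2^j distinct walks of length j n + 1 with one
   color sequence, so n_G(j n + 1) >= 2^j, which no polynomial bound survives. *)
From mathcomp Require Import all_boot zify.
Set Implicit Arguments. Unset Strict Implicit. Unset Printing Implicit Defensive.

Lemma linear_lt_exp2 K D : exists a, a * K + D < 2 ^ a.
Proof.
set b := 2 * K + D + 1; exists (b + b).
have hb : b < 2 ^ b := ltn_expl b (isT : 1 < 2).
have : b.+1 * b.+1 <= 2 ^ b * 2 ^ b by apply: leq_mul.
rewrite expnD /b; nia.
Qed.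

(* The witness j = 2^a - 1 makes (j n + 1)^k at most 2^(a k) n^k. *)
Lemma poly_lt_exp2 c k n N : 0 < n ->
  exists2 j, N <= (j * n).+1 & c * (j * n).+1 ^ k < 2 ^ j.
Proof.
move=> n_gt0; set C := c * n ^ k.
have [a ha] := linear_lt_exp2 k (C + N).
have pow_gt0 : 0 < 2 ^ a by rewrite expn_gt0.
exists (2 ^ a).-1.
  have : (2 ^ a).-1 <= (2 ^ a).-1 * n by rewrite leq_pmulr.
  lia.
have len_le : ((2 ^ a).-1 * n).+1 <= 2 ^ a * n.
  by rewrite -{2}(prednK pow_gt0) mulSn; lia.
have pow_le : c * ((2 ^ a).-1 * n).+1 ^ k <= C * 2 ^ (a * k).
  rewrite /C -mulnA [n ^ k * _]mulnC expnM -expnMn leq_mul //.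
  by case: k {ha C} => [|k]; rewrite ?expn0 ?leq_exp2r.
have C_lt : C * 2 ^ (a * k) < 2 ^ C * 2 ^ (a * k).
  by rewrite ltn_pmul2r ?expn_gt0 // ltn_expl.
have : 2 ^ (C + a * k) <= 2 ^ (2 ^ a).-1 by rewrite leq_exp2l //; lia.
rewrite expnD; lia.
Qed.

Section ColorLoops.
Variables (V Phi : finType) (E : rel V) (l : V -> Phi).
Variables (x : V) (B : bool -> seq V) (n : nat).
Hypothesis path_loop : forall b, path E x (B b).
Hypothesis last_loop : forall b, last x (B b) = x.
Hypothesis size_loop : forall b, size (B b) = n.
Hypothesis map_loop : map l (B true) = map l (B false).
Hypothesis loops_neq : B true != B false.

Definition concat_loops (bs : seq bool) : seq V := flatten (map B bs).

Lemma path_concat_loops bs :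
  path E x (concat_loops bs) /\ last x (concat_loops bs) = x.
Proof.
elim: bs => [|b bs [IHpath IHlast]] //=.
by rewrite /concat_loops /= cat_path last_cat last_loop path_loop.
Qed.

Lemma size_concat_loops bs : size (concat_loops bs) = size bs * n.
Proof.
elim: bs => [|b bs IH] //=.
by rewrite /concat_loops /= size_cat size_loop -/(concat_loops bs) IH mulSn.
Qed.

Lemma map_concat_loops bs bs' : size bs = size bs' ->
  map l (concat_loops bs) = map l (concat_loops bs').
Proof.
have map_loopE b : map l (B b) = map l (B true) by case: b.
elim: bs bs' => [|b bs IH] [|b' bs'] //= [eq_size].
by rewrite /concat_loops /= !map_cat !map_loopE -!/(concat_loops _) (IH bs').
Qed.

Lemma concat_loops_inj bs bs' : size bs = size bs' ->
  concat_loops bs = concat_loops bs' -> bs = bs'.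
Proof.
elim: bs bs' => [|b bs IH] [|b' bs'] //= [eq_size] /eqP.
rewrite /concat_loops /= eqseq_cat ?size_loop // => /andP [eq_head /eqP eq_tail].
rewrite (IH _ eq_size eq_tail); congr (_ :: _).
by move: eq_head loops_neq; case: b; case: b' => //= /eqP ->; rewrite eqxx.
Qed.

Lemma exp2_le_nG j : 2 ^ j <= nG E l (j * n).+1.
Proof.
set T := (j * n).+1.
pose walk (bs : j.-tuple bool) : T.-tuple V :=
  insubd (nseq_tuple T x) (x :: concat_loops bs).
have walkE bs : val (walk bs) = x :: concat_loops bs.
  by rewrite val_insubd /= size_concat_loops size_tuple eqxx.
have walk_inj : injective walk.
  move=> bs bs' /(congr1 val); rewrite !walkE => -[].
  by move/concat_loops_inj => eq_bs; apply/val_inj/eq_bs; rewrite !size_tuple.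
pose Y : T.-tuple Phi := map_tuple l (walk (nseq_tuple j true)).
apply: (@leq_trans #|hypotheses E l Y|); last first.
  exact: (@leq_bigmax _ (fun Z : T.-tuple Phi => #|hypotheses E l Z|)).
have <- : #|[set walk bs | bs in {: j.-tuple bool}]| = 2 ^ j.
  by rewrite card_imset // card_tuple card_bool.
apply/subset_leq_card/subsetP => _ /imsetP [bs _ ->].
rewrite inE /is_walk /Y /= !walkE; case: (path_concat_loops bs) => -> _ /=.
by rewrite (map_concat_loops (bs' := nseq j true)) ?size_tuple ?size_nseq.
Qed.

Lemma color_loops_not_trackable : ~ trackable E l.
Proof.
have n_gt0 : 0 < n.
  rewrite lt0n; apply: contraNneq loops_neq => n0.
  by move: (size_loop true) (size_loop false); rewrite n0 => /size0nil -> /size0nil ->.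
move=> [k [c [N bound]]].
have [j N_le poly_lt] := poly_lt_exp2 c k N n_gt0.
by have := bound _ N_le; have := exp2_le_nG j; lia.
Qed.

End ColorLoops.

Theorem corollary2 (V Phi : finType) (E : rel V) (l : V -> Phi)
  (hsc : strongly_connected E) (htr : trackable E l)
  (x : V) (s s' : seq V) :
  path E x s -> path E x s' ->
  size s = size s' ->
  last x s = last x s' ->
  map l (x :: s) = map l (x :: s') ->
  s = s'.
Proof.
move=> path_s path_s' eq_size eq_last [eq_map].
case: (eqVneq s s') => // neq_s; exfalso.
have [p path_p last_p] := connectP (hsc (last x s) x).
pose B b := (if b then s else s') ++ p.
apply: (@color_loops_not_trackable V Phi E l x B (size s + size p) _ _ _ _ _ htr).
- by case; rewrite /B cat_path ?path_s ?path_s' -?eq_last path_p.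
- by case; rewrite /B last_cat -?eq_last -last_p.
- by case; rewrite /B size_cat ?eq_size.
- by rewrite /B !map_cat eq_map.
- by rewrite /B /= eqseq_cat // eqxx andbT.
Qed.
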